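(* In the security 1st model, for every attacker AS $m$, destination AS $d$, and AS $s$ that, in normal conditions, has a secure route to $d$ that does not go through $m$, $s$ will use a secure route to $d$ even during $m$'s attack.
   Context: The AS-level topology is an undirected graph $G=(V,E)$ whose edges are annotated as customer-to-provider or peer-to-peer. For each destination AS $d$, every other AS selects one route among those announced to it by neighbors. An insecure AS ranks routes by: (LP, local preference) customer routes over peer routes over provider routes; (SP) shorter AS paths over longer ones; (TB) intradomain tiebreak. Export policy (Ex): a route via a customer is exported to all neighbors, otherwise only to customers. A set $S$ of ASes is secure (has deployed S*BGP); a route is secure if every AS on it is secure (it is learned via S*BGP), otherwise it is insecure. Each secure AS adds a step (SecP): prefer a secure route over an insecure route. In the security 1st model, SecP is placed before the LP step (all ASes use this same ordering). Attack: a single attacker AS $m$ (not actually adjacent to $d$) announces the bogus AS path ''$m,d$'' via legacy (insecure) BGP to all its neighbors; all ASes other than $m$ follow the policies above. ''Normal conditions'' means there is no attack. A protocol downgrade attack is when a source AS that uses a secure route to the legitimate destination under normal conditions switches to an insecure bogus route during the attack. *)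

From mathcomp Require Import all_boot.
Set Implicit Arguments. Unset Strict Implicit. Unset Printing Implicit Defensive.

(* AS-level topology: an undirected graph whose edges are annotated either
   customer-to-provider or peer-to-peer.
   [cust x y] : x is a customer of y (y is a provider of x).
   [peer x y] : x and y are peers. *)
Record topology (V : finType) := Topology {
  cust : rel V;
  peer : rel V;
  peer_sym : symmetric peer;
  peer_irr : irreflexive peer;
  cust_irr : irreflexive cust;
  cust_asym : forall x y, cust x y -> ~~ cust y x;
  cust_peer : forall x y, cust x y -> ~~ peer x y
}.

Section Routing.
Variables (V : finType) (G : topology V).

Definition adjacent (x y : V) : bool :=
  [|| cust G x y, cust G y x | peer G x y].

(* Standing Gao-Rexford assumption of the model: no customer-provider cycles. *)
Definition no_cp_cycle : Prop :=
  forall x y, cust G x y -> ~~ connect (cust G) y x.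

(* A route held by AS x is its AS path, listed from x to the destination:
   [:: x; next_hop; ...; d].  The destination's own route is [:: d]. *)
Definition next_hop (r : seq V) : option V :=
  if r is _ :: y :: _ then Some y else None.

(* Local-preference class of route r held by x:
   2 = customer route, 1 = peer route, 0 = provider route. *)
Definition lp_class (x : V) (r : seq V) : nat :=
  if r is _ :: y :: _ then
    (if cust G y x then 2 else if peer G x y then 1 else 0)
  else 0.

(* Scenario: [None] = normal conditions; [Some m] = attack by m.
   During m's attack, m announces only the bogus path "m,d" via legacy BGP,
   so every route containing m is (derived from) the bogus, insecure
   announcement. A route is secure iff every AS on it is in S (and, during
   the attack, it is not the bogus legacy route, i.e. does not contain m). *)
Definition is_secure (S : {set V}) (att : option V) (r : seq V) : bool :=
  all (fun v => v \in S) r &&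
  (if att is Some m then m \notin r else true).

Variables (S : {set V}) (tb : V -> V -> nat) (d : V).

Definition announce (att : option V) (sel : V -> option (seq V)) (y : V)
  : option (seq V) :=
  if att == Some y then Some [:: y; d] else sel y.

Definition exports (att : option V) (y x : V) (r : seq V) : bool :=
  [|| y == d, att == Some y, lp_class y r == 2 | cust G x y].

Definition candidate (att : option V) (sel : V -> option (seq V)) (x : V)
  (c : seq V) : Prop :=
  exists y r, [/\ adjacent x y, announce att sel y = Some r,
                  exports att y x r, x \notin r & c = x :: r].

(* [prefers att x c1 c2] : x strictly prefers route c1 to route c2 in the
   security 1st model: SecP (only for secure x), then LP, then SP, then the
   intradomain tiebreak TB on next hops (lower tb value preferred). *)
Definition prefers (att : option V) (x : V) (c1 c2 : seq V) : bool :=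
  let s1 := (x \in S) && is_secure S att c1 in
  let s2 := (x \in S) && is_secure S att c2 in
  let l1 := lp_class x c1 in
  let l2 := lp_class x c2 in
  let tbl := match next_hop c1, next_hop c2 with
             | Some y1, Some y2 => tb x y1 < tb x y2
             | _, _ => false end in
  (s1 && ~~ s2) ||
  ((s1 == s2) &&
   ((l2 < l1) ||
    ((l1 == l2) &&
     ((size c1 < size c2) || ((size c1 == size c2) && tbl))))).

Definition stable (att : option V) (sel : V -> option (seq V)) : Prop :=
  sel d = Some [:: d] /\
  forall x, x != d -> att != Some x ->
    (sel x = None -> forall c, ~ candidate att sel x c) /\
    (forall c, sel x = Some c ->
       candidate att sel x c /\
       forall c', candidate att sel x c' -> ~~ prefers att x c' c).

End Routing.

(* Induct on the normal route s, y, ... of s.  During the attack y keeps a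
   secure route c whose local preference is at least that of its normal
   route; as exports depend only on the LP class, y still exports c to s.
   If s is not on c, s is offered the secure route s :: c, and security 1st
   makes s select a secure route of at least that LP.  If s is on c, then s
   selects the suffix of c from s, which is secure; and if y exports to s
   only because c is a customer route, every AS on c, s included, holds a
   customer route. *)
From mathcomp Require Import all_boot.
Set Implicit Arguments. Unset Strict Implicit. Unset Printing Implicit Defensive.

Section LocalPreference.
Variables (V : finType) (G : topology V).

Lemma lp_class_le2 x c : lp_class G x c <= 2.
Proof. by case: c => [|? [|y ?]] //=; case: ifP => // _; case: ifP. Qed.

Lemma lp_class_pos_not_cust x z y t :
  0 < lp_class G x [:: z, y & t] -> ~~ cust G x y.
Proof.
rewrite /=; case: ifP => [cyx _|_]; first exact: cust_asym.
by case: ifP => // pxy _; apply: contraL pxy; apply: cust_peer.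
Qed.

Variables (d : V) (att : option V).

Lemma exports_customer_route y x r :
  exports G d att y x r -> ~~ cust G x y -> y != d -> att != Some y ->
  lp_class G y r = 2.
Proof. by case/or4P=> [->|->|/eqP//|->]. Qed.

Lemma exports_lp_mono att' y x r r' :
  exports G d att y x r -> att != Some y ->
  lp_class G y r <= lp_class G y r' -> exports G d att' y x r'.
Proof.
rewrite /exports => /or4P[->//|/eqP->|/eqP lp2 _ le_r|->]; rewrite ?eqxx ?orbT //.
by rewrite eqn_leq lp_class_le2 -lp2 le_r !orbT.
Qed.

End LocalPreference.

Lemma is_secure_suffix (V : finType) (S : {set V}) att c cu :
  is_secure S att c -> suffix cu c -> is_secure S att cu.
Proof.
move=> sec_c /suffixP[p cE]; move: sec_c.
rewrite cE /is_secure all_cat => /andP[/andP[_ ->]].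
by case: att => //= m; rewrite mem_cat negb_or => /andP[].
Qed.

Section StableOutcome.
Variables (V : finType) (G : topology V) (S : {set V}) (tb : V -> V -> nat).
Variables (d : V) (att : option V) (A : V -> option (seq V)).
Hypothesis HA : stable G S tb d att A.

Lemma announce_cons y r :
  announce d att A y = Some r -> exists t, r = y :: t.
Proof.
rewrite /announce; case: eqP => [_ [<-]|/eqP att_y]; first by exists [:: d].
have [Ad Hx] := HA; case: (eqVneq y d) => [->|yd Ay].
  by rewrite Ad => -[<-]; exists [::].
by have [[z [t [_ _ _ _ ->]]] _] := (Hx y yd att_y).2 r Ay; exists t.
Qed.

Lemma selected_route_cons x c :
  x != d -> att != Some x -> A x = Some c ->
  exists y r, [/\ c = x :: r, adjacent G x y, announce d att A y = Some r,
                  exports G d att y x r & exists t, r = y :: t].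
Proof.
move=> xd att_x Ax; have [[y [r [adj ann ex _ ->]]] _] := (HA.2 x xd att_x).2 c Ax.
by exists y, r; split=> //; apply: announce_cons ann.
Qed.

Lemma secure_candidate_selected x c :
  x != d -> att != Some x -> x \in S ->
  candidate G d att A x c -> is_secure S att c ->
  exists c', [/\ A x = Some c', is_secure S att c' &
                 lp_class G x c <= lp_class G x c'].
Proof.
move=> xd att_x xS cand sec_c; have [noroute best] := HA.2 x xd att_x.
case Ax: (A x) => [c'|]; last by case: (noroute Ax c cand).
have not_pref := (best c' Ax).2 c cand.
have sec_c' : is_secure S att c'.
  by apply: contraNT not_pref; rewrite /prefers xS sec_c => /negbTE ->.
exists c'; split=> //; move: not_pref.
by rewrite /prefers xS sec_c sec_c' /= negb_or -leqNgt => /andP[].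
Qed.

End StableOutcome.

Section Attack.
Variables (V : finType) (G : topology V) (S : {set V}) (tb : V -> V -> nat).
Variables (m d : V) (A : V -> option (seq V)).
Hypothesis HA : stable G S tb d (Some m) A.

Lemma some_neq (x : V) : x != m -> Some m != Some x.
Proof. by rewrite (inj_eq Some_inj) eq_sym. Qed.

Lemma selected_suffix c x :
  x != m -> A x = Some c -> m \notin c -> forall u, u \in c ->
  exists cu, [/\ A u = Some cu, suffix cu c &
                 (lp_class G x c = 2 -> u != d -> lp_class G u cu = 2)].
Proof.
have [Ad _] := HA.
elim: c x => // z r IH x xm Ax m_c u u_c.
have [xE|xd] := eqVneq x d.
  move: Ax; rewrite xE Ad => -[zE rE]; move: u_c; rewrite -zE -rE inE => /eqP ->.
  by exists [:: d]; rewrite suffix_refl.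
have [y [r' [[zE <-] _ ann ex [t rE]]]] :=
  selected_route_cons HA xd (some_neq xm) Ax; subst z.
have ym : y != m by apply: contraNneq m_c => <-; rewrite rE !inE eqxx orbT.
have Ay : A y = Some r by rewrite -ann /announce ifN // some_neq.
move: u_c; rewrite inE => /predU1P[->|u_r].
  by exists (x :: r); rewrite suffix_refl.
have m_r : m \notin r by move: m_c; rewrite inE negb_or => /andP[].
have [cu [Au suf cust_cu]] := IH y ym Ay m_r u u_r.
exists cu; split=> //; first exact: (suffix_catr [:: x] suf).
move=> lp2 ud; have yd : y != d.
  apply: contraNneq ud => yE.
  by move: u_r Ay; rewrite yE Ad => /[swap] -[<-] /[!inE].
apply: cust_cu => //; apply: exports_customer_route ex _ yd (some_neq ym).
by apply: (lp_class_pos_not_cust (z := x) (t := t)); rewrite -rE lp2.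
Qed.

Variables (N : V -> option (seq V)).
Hypothesis HN : stable G S tb d None N.
Hypothesis m_neq_d : m != d.

Lemma secure_route_survives rv v :
  N v = Some rv -> is_secure S None rv -> m \notin rv ->
  exists c, [/\ A v = Some c, is_secure S (Some m) c &
                lp_class G v rv <= lp_class G v c].
Proof.
elim: rv v => [v Nv|z r IH v Nv sec m_rv].
  by have [t] := announce_cons HN (y := v) (r := [::]) Nv.
have [vE|vd] := eqVneq v d.
  move: Nv sec m_rv; rewrite vE HN.1 => -[<- <-] sec _; exists [:: d].
  by move: sec; rewrite HA.1 /is_secure /= mem_seq1 m_neq_d !andbT.
have [y [r' [[zE <-] adj ann ex [t rE]]]] :=
  selected_route_cons HN vd isT Nv; subst z.
have [vS sec_r] : v \in S /\ is_secure S None r.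
  by move: sec; rewrite /is_secure /= !andbT => /andP.
have vm : v != m by apply: contraNneq m_rv => <-; rewrite inE eqxx.
have m_r : m \notin r by move: m_rv; rewrite inE negb_or => /andP[].
have ym : y != m by apply: contraNneq m_r => <-; rewrite rE inE eqxx.
have [c [Ay sec_c lp_c]] := IH y (ann : N y = Some r) sec_r m_r.
have m_c : m \notin c by case/andP: sec_c.
have ex_c : exports G d (Some m) y v c by apply: exports_lp_mono ex _ lp_c.
have ann_c : announce d (Some m) A y = Some c by rewrite /announce ifN ?some_neq.
have [t' cE] := announce_cons HA ann_c.
have [v_c|v_c] := boolP (v \in c).
  have [cu [Av suf cust_cu]] := selected_suffix ym Ay m_c v_c.
  exists cu; split=> //; first exact: is_secure_suffix sec_c suf.
  have [->//|lp_pos] := posnP (lp_class G v (v :: r)).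
  have yd : y != d.
    apply: contraNneq vd => yE.
    by move: v_c Ay; rewrite yE HA.1 => /[swap] -[<-] /[!inE].
  rewrite cust_cu ?lp_class_le2 //.
  apply: exports_customer_route ex_c _ yd (some_neq ym).
  by apply: (lp_class_pos_not_cust (z := v) (t := t)); rewrite -rE.
have cand : candidate G d (Some m) A v (v :: c) by exists y, c.
have sec_vc : is_secure S (Some m) (v :: c).
  by move: sec_c; rewrite /is_secure /= vS inE negb_or eq_sym vm.
have [c' [Av sec_c' lp_c']] :=
  secure_candidate_selected HA vd (some_neq vm) vS cand sec_vc.
by exists c'; split=> //; move: lp_c'; rewrite cE rE.
Qed.

End Attack.

Theorem theorem2 (V : finType) (G : topology V) (S : {set V})
  (tb : V -> V -> nat) (tb_inj : forall x, injective (tb x))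
  (acyc : no_cp_cycle G)
  (m d s : V) (m_neq_d : m != d) (m_not_adj_d : ~~ adjacent G m d)
  (N : V -> option (seq V)) (r : seq V)
  (HN : stable G S tb d None N)
  (Hs : N s = Some r) (Hsec : is_secure S None r) (Hm : m \notin r)
  (A : V -> option (seq V))
  (HA : stable G S tb d (Some m) A) :
  exists r', A s = Some r' /\ is_secure S (Some m) r'.
Proof.
have [c [As sec_c _]] := secure_route_survives HA HN m_neq_d Hs Hsec Hm.
by exists c.
Qed.
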